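(* The set of functions $\{\sigma_\omega\}_{\omega\in S}$ is linearly independent as a set of real-valued functions on the set of all Seifert matrices. That is, if $\omega_1,\dots,\omega_N\in S$ are distinct and $c_1,\dots,c_N\in\mathbb{R}$ satisfy $\sum_{i=1}^N c_i\,\sigma_{\omega_i}(V)=0$ for every Seifert matrix $V$, then $c_1=\dots=c_N=0$.
   Context: A Seifert matrix is a square integral matrix $V$ with $\det(V-V^T)=\pm1$ (such a matrix necessarily has even size). For a unit complex number $\omega$, the hermitianized Seifert form is $V_\omega=(1-\omega)V+(1-\bar\omega)V^T$ (a Hermitian matrix), and $\sigma_\omega(V)$ denotes its signature. $S$ denotes the set of unit complex numbers with positive imaginary part. *)

From mathcomp Require Import all_boot all_order all_algebra.
From mathcomp.real_closed Require Import complex.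
From mathcomp Require Import reals.
Set Implicit Arguments.
Unset Strict Implicit.
Unset Printing Implicit Defensive.
Import Order.TTheory GRing.Theory Num.Theory.
Local Open Scope ring_scope.

Definition seifert (n : nat) (V : 'M[int]_n) : Prop :=
  \det (V - V^T) = 1 \/ \det (V - V^T) = -1.

(* The eigenvalues (with multiplicity) of a square matrix over an algebraically
   closed field: the roots of its (monic) characteristic polynomial. *)
Definition eigenvalues (C : numClosedFieldType) (n : nat) (A : 'M[C]_n) : seq C :=
  sval (closed_field_poly_normal (char_poly A)).

Definition signature (C : numClosedFieldType) (n : nat) (A : 'M[C]_n) : int :=
  (count (fun x => 0 < x) (eigenvalues A))%:Z - (count (fun x => x < 0) (eigenvalues A))%:Z.

Definition herm_seifert (R : realType) (w : R[i]) (n : nat) (V : 'M[int]_n) : 'M[R[i]]_n :=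
  let VC := map_mx (fun z : int => z%:~R : R[i]) V in
  (1 - w) *: VC + (1 - w^*) *: VC^T.

Definition sigma_w (R : realType) (w : R[i]) (n : nat) (V : 'M[int]_n) : int :=
  signature (herm_seifert w V).

Definition in_S (R : realType) (w : R[i]) : Prop := `|w| = 1 /\ 0 < 'Im w.

From mathcomp Require Import all_boot all_order all_algebra.
From mathcomp.real_closed Require Import complex.
From mathcomp Require Import reals.
From mathcomp Require Import ring lra.
Import Order.TTheory GRing.Theory Num.Theory.
Set Implicit Arguments.
Unset Strict Implicit.
Unset Printing Implicit Defensive.
Local Open Scope complex_scope.
Local Open Scope ring_scope.

(* For k > 0 and m >= 0 consider the Seifert matrix V = [[A, 1], [0, 1]] with
   A = [[0, k], [k, -km]].  For w in S put t = 2 - 2 Re w = |1 - w|^2 > 0.  The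
   characteristic polynomial of V_w is the product of the two real-rooted
   quadratics X^2 - t(1 + a)X + t(at - 1) for a = k rho and a = -k / rho, where
   rho > 0 solves rho^2 + m rho = 1; reading off the signs of the roots,
   sigma_w(V) is 2 when k rho > 1/t and 0 when k rho < 1/t.  The values k rho are
   dense in the positive reals and w |-> 1/t is injective on S, so a vanishing
   combination of the sigma_{w_i} is a vanishing combination of step functions
   with distinct jumps; comparing just below and just above the jump of w_j
   gives c_j = 0. *)

Lemma step_functions_independent (R : realFieldType) (I : finType) (y c : I -> R)
    (D : R -> Prop) :
  injective y -> (forall k, 0 < y k) ->
  (forall lo hi, 0 <= lo -> lo < hi -> exists2 a, D a & lo < a < hi) ->
  (forall a, D a -> (forall k, y k != a) -> \sum_(k | y k < a) c k = 0) ->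
  forall j, c j = 0.
Proof.
move=> y_inj y_gt0 D_dense sumD0 j.
pose d := \big[Order.min/y j]_(k | k != j) `|y k - y j|.
have d_gt0 : 0 < d.
  apply/bigmin_gtP; split=> // k kj.
  by rewrite normr_gt0 subr_eq0 (inj_eq y_inj).
have d_le_yj : d <= y j := bigmin_le_id _ _ _ _.
have d_le k : k != j -> d <= `|y k - y j|.
  exact: (bigmin_le_cond _ _ (P := fun k => k != j)).
have near_yj a k : `|a - y j| < d / 2 -> k != j -> y k != a /\ (y k < a) = (y k < y j).
  move=> + /d_le; rewrite ltr_norml ler_normr => /andP[? ?] /orP[] ?.
    by split; [rewrite gt_eqF | apply/idP/idP]; lra.
  by split; [rewrite lt_eqF | apply/idP/idP]; lra.
have avoid a k : `|a - y j| < d / 2 -> a != y j -> y k != a.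
  move=> near aj; have [-> | kj] := eqVneq k j; first by rewrite eq_sym.
  exact: (near_yj a k near kj).1.
have sum_near a : `|a - y j| < d / 2 ->
    \sum_(k | y k < a) c k =
    (if y j < a then c j else 0) + \sum_(k | k != j) (if y k < y j then c k else 0).
  move=> near; rewrite big_mkcond (bigD1 j) //=; congr (_ + _).
  by apply: eq_bigr => k kj; rewrite (near_yj a k near kj).2.
have [a1 Da1 /andP[a1_gt a1_lt]] := D_dense (y j) (y j + d / 2) (ltW (y_gt0 j)) ltac:(lra).
have [a2 Da2 /andP[a2_gt a2_lt]] := D_dense (y j - d / 2) (y j) ltac:(lra) ltac:(lra).
have near1 : `|a1 - y j| < d / 2 by rewrite ltr_norml; lra.
have near2 : `|a2 - y j| < d / 2 by rewrite ltr_norml; lra.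
have := sumD0 a2 Da2 (fun k => avoid _ k near2 (negbT (lt_eqF a2_lt))).
rewrite sum_near // ltNge (ltW a2_lt) add0r => sum_below.
have := sumD0 a1 Da1 (fun k => avoid _ k near1 (negbT (gt_eqF a1_gt))).
by rewrite sum_near // a1_gt sum_below addr0.
Qed.

Lemma sqr_addX_eq1_pos_root (R : rcfType) (m : R) : 0 <= m ->
  exists2 rho : R, 0 < rho & rho ^+ 2 + m * rho = 1.
Proof.
move=> m_ge0; set d := Num.sqrt (m ^+ 2 + 4).
have d2 : d ^+ 2 = m ^+ 2 + 4 by rewrite sqr_sqrtr // addr_ge0 ?sqr_ge0.
have d_ge0 : 0 <= d by rewrite sqrtr_ge0.
exists ((d - m) / 2).
  by rewrite divr_gt0 // subr_gt0; nra.
by transitivity ((d ^+ 2 - m ^+ 2) / 4); [field | rewrite d2; field].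
Qed.

Lemma nat_multiple_between (R : archiRealFieldType) (lo hi rho : R) :
  0 <= lo -> 0 < rho -> rho < hi - lo -> exists2 k : nat, (0 < k)%N & lo < k%:R * rho < hi.
Proof.
move=> lo_ge0 rho_gt0 rho_lt.
set n := Num.truncn (lo / rho).
have /andP[n_le n_gt] : n%:R <= lo / rho < n.+1%:R by apply: truncn_itv; rewrite divr_ge0 // ltW.
have lo_eq : lo / rho * rho = lo by rewrite mulfVK ?lt0r_neq0.
exists n.+1 => //; apply/andP; split.
  by rewrite -(ltr_pM2r rho_gt0) lo_eq in n_gt.
rewrite -(ler_pM2r rho_gt0) lo_eq in n_le.
by rewrite -addn1 natrD mulrDl mul1r; lra.
Qed.

Section RealSpectrum.
Variable R : realType.

Definition sign_balance (s : seq R) : int :=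
  (count (fun x => 0 < x) s)%:Z - (count (fun x => x < 0) s)%:Z.

Lemma sign_balance_cat s1 s2 :
  sign_balance (s1 ++ s2) = sign_balance s1 + sign_balance s2.
Proof. by rewrite /sign_balance !count_cat !PoszD; ring. Qed.

Lemma sign_balance_opposite_signs (x y : R) : x * y < 0 -> sign_balance [:: x; y] = 0.
Proof.
move=> xy_lt0; rewrite /sign_balance /=.
have [[x_gt0 y_lt0] | [x_lt0 y_gt0]] : (0 < x /\ y < 0) \/ (x < 0 /\ 0 < y).
  have [x_gt0 | x_le0] := ltP 0 x; [left | right].
    by rewrite -(pmulr_rlt0 _ x_gt0).
  have x_lt0 : x < 0.
    by rewrite lt_neqAle x_le0 andbT; apply: contraTneq xy_lt0 => ->; rewrite mul0r ltxx.
  by rewrite -(nmulr_rlt0 _ x_lt0).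
- by rewrite x_gt0 y_lt0 (lt_gtF x_gt0) (lt_gtF y_lt0).
- by rewrite x_lt0 y_gt0 (lt_gtF x_lt0) (lt_gtF y_gt0).
Qed.

Lemma sign_balance_positive_pair (x y : R) :
  0 < x * y -> 0 < x + y -> sign_balance [:: x; y] = 2.
Proof.
move=> xy_gt0 xDy_gt0.
have [x_gt0 y_gt0] : 0 < x /\ 0 < y by split; nra.
by rewrite /sign_balance /= x_gt0 y_gt0 (lt_gtF x_gt0) (lt_gtF y_gt0).
Qed.

Lemma signature_real_spectrum n (A : 'M[R[i]]_n) (s : seq R) :
  char_poly A = \prod_(x <- s) ('X - (x%:C)%:P) -> signature A = sign_balance s.
Proof.
rewrite /signature /eigenvalues; case: closed_field_poly_normal => r /= -> sE.
have /permP perm_rs : perm_eq r [seq x%:C | x <- s].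
  apply: prod_XsubC_eq; rewrite -[LHS]scale1r -(monicP (char_poly_monic A)).
  by rewrite sE big_map.
rewrite !perm_rs !count_map /sign_balance; congr (_%:Z - _%:Z); apply: eq_count => x /=;
  by rewrite ltcE /= eqxx.
Qed.

Lemma real_quadratic_split (S P : R) : 0 <= S ^+ 2 - 4 * P ->
  exists x y, [/\ 'X^2 - (S%:C)%:P * 'X + (P%:C)%:P = ('X - (x%:C)%:P) * ('X - (y%:C)%:P),
                  x + y = S & x * y = P].
Proof.
move=> disc_ge0; set d := Num.sqrt (S ^+ 2 - 4 * P).
have d2 : d ^+ 2 = S ^+ 2 - 4 * P by rewrite sqr_sqrtr.
have xDy : (S + d) / 2 + (S - d) / 2 = S by field.
have xMy : (S + d) / 2 * ((S - d) / 2) = P.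
  by transitivity ((S ^+ 2 - d ^+ 2) / 4); [field | rewrite d2; field].
exists ((S + d) / 2), ((S - d) / 2); split=> //.
by rewrite -[in LHS]xDy -[in LHS]xMy; ring.
Qed.

End RealSpectrum.

Lemma det_block_scalar (D : idomainType) n (P : 'M[D]_n) (q r s : D) : s != 0 ->
  \det (block_mx P q%:M r%:M s%:M : 'M_(n + n)) = \det (s *: P - (q * r)%:M).
Proof.
move=> s_neq0.
have E : block_mx P q%:M r%:M s%:M *m block_mx s%:M 0 (- r%:M) 1 =
         block_mx (s *: P - (q * r)%:M) q%:M 0 s%:M :> 'M_(n + n).
  rewrite mulmx_block; congr block_mx.
  - by rewrite mul_mx_scalar mulmxN mul_scalar_mx scale_scalar_mx.
  - by rewrite mulmx0 add0r mulmx1.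
  - by rewrite mulmxN !mul_scalar_mx !scale_scalar_mx mulrC subrr.
  - by rewrite mulmx0 add0r mulmx1.
have := congr1 determinant E.
rewrite det_mulmx det_lblock det_ublock det1 mulr1 det_scalar.
exact: (mulIf (expf_neq0 _ s_neq0)).
Qed.

Lemma det_mx2 (D : comPzRingType) (M : 'M[D]_2) :
  \det M = M 0 0 * M 1 1 - M 0 1 * M 1 0.
Proof.
rewrite (expand_det_row _ 0) !big_ord_recl big_ord0 addr0 /cofactor.
rewrite !det_mx11 !mxE /= expr0 expr1 mul1r mulN1r mulrN.
by congr (_ * M _ _ - _ * M _ _); try congr (M _ _); apply: val_inj.
Qed.

Definition seifert_test_form (k m : nat) : 'M[int]_2 :=
  \matrix_(i, j) (if (i == 0 :> nat) && (j == 0 :> nat) then 0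
                  else if (i == 1 :> nat) && (j == 1 :> nat) then - (k * m)%:Z
                  else k%:Z).

Definition seifert_test (k m : nat) : 'M[int]_(2 + 2) := block_mx (seifert_test_form k m) 1 0 1.

Lemma seifert_test_form_sym k m : (seifert_test_form k m)^T = seifert_test_form k m.
Proof.
apply/matrixP => i j; rewrite !mxE.
by case: i => [[|[|//]] ?]; case: j => [[|[|//]] ?].
Qed.

Lemma seifert_test_seifert k m : seifert (seifert_test k m).
Proof.
rewrite /seifert /seifert_test tr_block_mx seifert_test_form_sym trmx1 trmx0 opp_block_mx.
rewrite add_block_mx subrr subr0 sub0r subrr.
set M := block_mx _ _ _ _.
have M2 : M *m M = (-1)%:M.
  rewrite /M mulmx_block !mulmx0 !mul0mx !mulmx1 !mul1mx !add0r addr0.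
  by rewrite -!raddfN -scalar_mx_block.
have /eqP := congr1 determinant M2.
rewrite det_mulmx det_scalar -signr_odd /= expr0 -expr2 sqrf_eq1.
by case/orP => /eqP ->; [left | right].
Qed.

Section HermitianSeifertTest.
Variable R : realType.
Local Notation C := R[i].

Lemma normc1_Re_Im (w : C) : `|w| = 1 -> complex.Re w ^+ 2 + complex.Im w ^+ 2 = 1.
Proof. by move=> w1; have := add_Re2_Im2 w; rewrite w1 expr1n => -[]. Qed.

Lemma normc1_herm_coeffs (w : C) : `|w| = 1 ->
  (1 - w) + (1 - w^*) = (2 - 2 * complex.Re w)%:C /\
  (1 - w) * (1 - w^*) = (2 - 2 * complex.Re w)%:C.
Proof.
move=> /normc1_Re_Im; case: w => a b /= ab1.
split; apply/eqP; rewrite eq_complex /=; apply/andP; split; apply/eqP; try ring.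
by transitivity (1 - 2 * a + (a ^+ 2 + b ^+ 2)); [ring | rewrite ab1; ring].
Qed.

Lemma herm_seifert_test (w : C) k m :
  let tau := (1 - w) + (1 - w^*) in
  herm_seifert w (seifert_test k m) =
  block_mx (tau *: map_mx (fun z : int => z%:~R) (seifert_test_form k m))
           (1 - w)%:M (1 - w^*)%:M tau%:M.
Proof.
rewrite /herm_seifert /seifert_test map_block_mx map_mx1 map_mx0 tr_block_mx.
rewrite trmx1 trmx0 !scale_block_mx add_block_mx map_trmx seifert_test_form_sym.
by rewrite !scaler0 addr0 add0r -!scalerDl !scalemx1.
Qed.

Lemma char_poly_seifert_test (w : C) k m :
  let tau := (1 - w) + (1 - w^*) in
  let p := (1 - w) * (1 - w^*) in
  let s := 'X - tau%:P in
  char_poly (herm_seifert w (seifert_test k m)) =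
  (s * 'X - p%:P) * (s * 'X - p%:P + (tau * (k * m)%:R)%:P * s)
   - (tau * k%:R)%:P ^+ 2 * s ^+ 2.
Proof.
move=> tau p s.
rewrite herm_seifert_test /char_poly /char_poly_mx map_block_mx (scalar_mx_block 2 2).
rewrite !map_scalar_mx opp_block_mx add_block_mx !sub0r.
rewrite -!(raddfN (@scalar_mx _ 2)) -(raddfD (@scalar_mx _ 2)).
rewrite det_block_scalar ?polyXsubC_eq0 // det_mx2 !mxE /= ?mulr1n ?mulr0n ?rmorphN ?pmulrn.
by rewrite /s /p /tau; ring.
Qed.

Definition seifert_test_factor (t a : R) : {poly C} :=
  'X^2 - ((t * (1 + a))%:C)%:P * 'X + ((t * (a * t - 1))%:C)%:P.

Lemma seifert_test_factorization (t a1 a2 : R) (k m : nat) :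
  a1 + a2 = - (k * m)%:R -> a1 * a2 = - k%:R ^+ 2 ->
  let s := 'X - (t%:C)%:P in
  (s * 'X - (t%:C)%:P) * (s * 'X - (t%:C)%:P + (t%:C * (k * m)%:R)%:P * s)
   - (t%:C * k%:R)%:P ^+ 2 * s ^+ 2 =
  seifert_test_factor t a1 * seifert_test_factor t a2.
Proof.
move=> a1Da2 a1Ma2 s.
have km : (k * m)%:R = (- (a1 + a2))%:C :> C by rewrite a1Da2 opprK rmorph_nat.
have k2 : k%:R ^+ 2 = (- (a1 * a2))%:C :> C by rewrite a1Ma2 opprK rmorphXn rmorph_nat.
rewrite km.
transitivity ((s * 'X - (t%:C)%:P) * (s * 'X - (t%:C)%:P + (t%:C * (- (a1 + a2))%:C)%:P * s)
   - ((t%:C)^+2)%:P * (k%:R ^+ 2)%:P * s ^+ 2); first by ring.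
rewrite k2 /seifert_test_factor /s; ring.
Qed.

Lemma seifert_test_factor_split (t a : R) : 0 < t ->
  exists x y, [/\ seifert_test_factor t a = ('X - (x%:C)%:P) * ('X - (y%:C)%:P),
                  x + y = t * (1 + a) & x * y = t * (a * t - 1)].
Proof.
move=> t_gt0; apply: real_quadratic_split.
have -> : (t * (1 + a)) ^+ 2 - 4 * (t * (a * t - 1)) = (t * (1 - a)) ^+ 2 + 4 * t by ring.
by rewrite addr_ge0 ?sqr_ge0 // mulr_ge0 // ltW.
Qed.

Lemma in_S_Im_gt0 (w : C) : in_S w -> 0 < complex.Im w.
Proof. by case=> _; rewrite -complexIm ltcE /= eqxx. Qed.

Lemma in_S_Re_lt1 (w : C) : in_S w -> complex.Re w < 1.
Proof.
move=> wS; have := normc1_Re_Im wS.1; have := in_S_Im_gt0 wS; nra.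
Qed.

Definition threshold (w : C) : R := (2 - 2 * complex.Re w)^-1.

Lemma threshold_gt0 (w : C) : in_S w -> 0 < threshold w.
Proof. by move/in_S_Re_lt1 => Re_lt1; rewrite invr_gt0; lra. Qed.

Lemma threshold_inj_S (u v : C) : in_S u -> in_S v -> threshold u = threshold v -> u = v.
Proof.
move=> uS vS /invr_inj ReE.
have {ReE} Re_uv : complex.Re u = complex.Re v by lra.
have := normc1_Re_Im uS.1; have := normc1_Re_Im vS.1.
have := in_S_Im_gt0 uS; have := in_S_Im_gt0 vS.
case: u uS Re_uv => a b _; case: v vS => a' b' _ /= -> b'_gt0 b_gt0 ab1 a'b1.
by congr (_ +i* _); nra.
Qed.

Lemma sigma_seifert_test (w : C) (k m : nat) (rho : R) :
  in_S w -> (0 < k)%N -> 0 < rho -> rho ^+ 2 + m%:R * rho = 1 ->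
  k%:R * rho != threshold w ->
  sigma_w w (seifert_test k m) = if threshold w < k%:R * rho then 2 else 0.
Proof.
move=> wS k_gt0 rho_gt0 rho_root a_neq.
have [tauE pE] := normc1_herm_coeffs wS.1.
set t := 2 - 2 * complex.Re w.
have t_gt0 : 0 < t by have := in_S_Re_lt1 wS; rewrite /t; lra.
have k_pos : 0 < k%:R :> R by rewrite ltr0n.
(* a2 = - k / rho, as rho^-1 = m + rho *)
set a1 := k%:R * rho; set a2 := - (k%:R * (m%:R + rho)).
have a1Da2 : a1 + a2 = - (k * m)%:R by rewrite /a1 /a2 natrM; ring.
have a1Ma2 : a1 * a2 = - k%:R ^+ 2.
  transitivity (- (k%:R ^+ 2 * (rho ^+ 2 + m%:R * rho))); first by rewrite /a1 /a2; ring.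
  by rewrite rho_root mulr1.
have [x1 [y1 [f1E x1Dy1 x1My1]]] := seifert_test_factor_split a1 t_gt0.
have [x2 [y2 [f2E _ x2My2]]] := seifert_test_factor_split a2 t_gt0.
have spec : char_poly (herm_seifert w (seifert_test k m)) =
    \prod_(x <- [:: x1; y1] ++ [:: x2; y2]) ('X - (x%:C)%:P).
  rewrite char_poly_seifert_test tauE pE (seifert_test_factorization _ a1Da2 a1Ma2).
  by rewrite f1E f2E !big_cons big_nil !mulr1 mulrA.
rewrite /sigma_w (signature_real_spectrum spec) sign_balance_cat.
rewrite (sign_balance_opposite_signs (x := x2)) ?addr0; last first.
  have a2_lt0 : a2 < 0 by rewrite /a2 oppr_lt0 mulr_gt0 // ltr_wpDl ?ler0n.
  by rewrite x2My2 pmulr_rlt0 // subr_lt0 (lt_trans _ ltr01) // nmulr_rlt0.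
have -> : (threshold w < a1) = (1 < a1 * t) by rewrite /threshold -div1r ltr_pdivrMr.
have a1t_neq1 : a1 * t != 1.
  apply: contra_neq a_neq => a1t1; apply: (mulIf (lt0r_neq0 t_gt0)).
  by rewrite a1t1 /threshold mulVf ?lt0r_neq0.
have [a1t_gt1 | a1t_lt1] := ltP 1 (a1 * t).
- apply: sign_balance_positive_pair; first by rewrite x1My1 mulr_gt0 // subr_gt0.
  by rewrite x1Dy1 mulr_gt0 // ltr_pwDr // mulr_gt0.
- apply: sign_balance_opposite_signs; rewrite x1My1 pmulr_rlt0 // subr_lt0.
  by rewrite lt_neqAle a1t_neq1.
Qed.
End HermitianSeifertTest.

Definition seifert_test_level (R : realType) (a : R) : Prop :=
  exists (k m : nat) (rho : R),
    [/\ (0 < k)%N, 0 < rho, rho ^+ 2 + m%:R * rho = 1 & a = k%:R * rho].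

Lemma seifert_test_level_dense (R : realType) (lo hi : R) :
  0 <= lo -> lo < hi -> exists2 a, seifert_test_level a & lo < a < hi.
Proof.
move=> lo_ge0 lo_lt_hi.
have [m m_large] : exists m : nat, 1 < m%:R * (hi - lo).
  exists (Num.truncn (hi - lo)^-1).+1.
  by rewrite -ltr_pdivrMr ?subr_gt0 // div1r truncnS_gt.
have [rho rho_gt0 rho_root] := sqr_addX_eq1_pos_root (ler0n R m).
have [k k_gt0 k_between] : exists2 k : nat, (0 < k)%N & lo < k%:R * rho < hi.
  by apply: nat_multiple_between => //; nra.
by exists (k%:R * rho) => //; exists k, m, rho.
Qed.

Theorem theorem1 (R : realType) (N : nat) (w : 'I_N -> R[i]) (c : 'I_N -> R) :
  (forall k, in_S (w k)) ->
  injective w ->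
  (forall (n : nat) (V : 'M[int]_n), seifert V ->
     \sum_(k < N) c k * (sigma_w (w k) V)%:~R = 0) ->
  forall k, c k = 0.
Proof.
move=> wS w_inj sum_sigma0.
apply: (@step_functions_independent _ _ (fun i => threshold (w i)) c (@seifert_test_level R)).
- by move=> i j /(threshold_inj_S (wS i) (wS j)) /w_inj.
- by move=> i; exact: threshold_gt0.
- exact: seifert_test_level_dense.
move=> _ [k [m [rho [k_gt0 rho_gt0 rho_root ->]]]] avoid.
have := sum_sigma0 _ _ (seifert_test_seifert k m).
rewrite (eq_bigr (fun i => 2 * (if threshold (w i) < k%:R * rho then c i else 0))) => [|i _].
  by rewrite -big_distrr -big_mkcond /= => /eqP; rewrite mulf_eq0 pnatr_eq0 => /eqP.
rewrite (sigma_seifert_test (wS i) k_gt0 rho_gt0 rho_root) 1?eq_sym ?avoid //.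
by case: ifP => _; rewrite ?mulr0 // mulrC.
Qed.
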